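(* Let $\mathcal{A}$ be any simply closed set of Left dead-ends. Then $\mathcal{D}(\mathcal{A})\cap\mathcal{L}=\mathcal{A}$.
   Context: Games are finite partizan games. A universe is a set of games closed under options, disjunctive sums, conjugates, and forming $\{\mathscr{G}^L\mid\mathscr{G}^R\}$ from nonempty finite subsets of it; $\mathcal{D}(\mathcal{A})$ is the smallest universe containing $\mathcal{A}$. A set is simply closed if it is closed under taking options and under disjunctive sums. A Left dead-end is a game all of whose subpositions have no Left option; $\mathcal{L}$ is the set of Left dead-ends. *)

From Stdlib Require Import List.
Import ListNotations.

Inductive game : Type :=
  | Game : list game -> list game -> game.

Definition lefts (g : game) : list game := let (l, _) := g in l.
Definition rights (g : game) : list game := let (_, r) := g in r.

Fixpoint conj (g : game) : game :=
  match g with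
  | Game l r => Game (map conj r) (map conj l)
  end.

(* Disjunctive sum: G + H = { G^L + H, G + H^L | G^R + H, G + H^R }. *)
Fixpoint add (g h : game) {struct g} : game :=
  let fix addh (h : game) : game :=
    match g, h with
    | Game gl gr, Game hl hr =>
        Game (map (fun x => add x h) gl ++ map addh hl)
             (map (fun x => add x h) gr ++ map addh hr)
    end in
  addh h.

Definition is_option (h g : game) : Prop := In h (lefts g) \/ In h (rights g).

Inductive subpos : game -> game -> Prop :=
  | subpos_refl g : subpos g g
  | subpos_opt h g k : is_option h g -> subpos k h -> subpos k g.

Definition left_dead_end (g : game) : Prop :=
  forall h, subpos h g -> lefts h = nil.

Definition simply_closed (A : game -> Prop) : Prop :=
  (forall g h, A g -> is_option h g -> A h) /\
  (forall g h, A g -> A h -> A (add g h)).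

Definition universe (U : game -> Prop) : Prop :=
  (forall g h, U g -> is_option h g -> U h) /\
  (forall g h, U g -> U h -> U (add g h)) /\
  (forall g, U g -> U (conj g)) /\
  (forall l r, l <> nil -> r <> nil -> Forall U l -> Forall U r -> U (Game l r)).

Definition Dclos (A : game -> Prop) (g : game) : Prop :=
  forall U, universe U -> (forall x, A x -> U x) -> U g.

(* Let P h say: if h is a Left dead-end then h is in A, and if conj h is a Left
   dead-end then conj h is in A.  The games all of whose subpositions satisfy P
   form a universe: P is stable under conjugation, under sums (a sum is a Left
   dead-end only if both summands are, and A is closed under sums), and holds
   vacuously for {G^L | G^R} with both option lists nonempty.  This universe
   contains A: a subposition of a game of A is in A, and a game which is a Left
   dead-end together with its conjugate is 0.  Hence every Left dead-end of
   D(A) lies in A. *)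
From Stdlib Require Import List.
Import ListNotations.

Definition game_nested_ind (P : game -> Prop)
  (H : forall l r, Forall P l -> Forall P r -> P (Game l r)) : forall g, P g :=
  fix F g := match g with
  | Game l r =>
      let fix Fs (l : list game) : Forall P l :=
        match l with [] => Forall_nil _ | x :: t => Forall_cons _ (F x) (Fs t) end in
      H l r (Fs l) (Fs r)
  end.

Lemma add_Game gl gr hl hr : add (Game gl gr) (Game hl hr) =
  Game (map (fun x => add x (Game hl hr)) gl ++ map (add (Game gl gr)) hl)
       (map (fun x => add x (Game hl hr)) gr ++ map (add (Game gl gr)) hr).
Proof. reflexivity. Qed.

Lemma conj_involutive g : conj (conj g) = g.
Proof.
  induction g as [l r IHl IHr] using game_nested_ind; simpl.
  rewrite !map_map, !(map_ext_Forall _ _ IHl), !(map_ext_Forall _ _ IHr), !map_id.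
  reflexivity.
Qed.

Lemma conj_add g : forall h, conj (add g h) = add (conj g) (conj h).
Proof.
  induction g as [gl gr IHgl IHgr] using game_nested_ind.
  induction h as [hl hr IHhl IHhr] using game_nested_ind.
  rewrite add_Game; simpl conj; rewrite add_Game, !map_app, !map_map.
  f_equal; f_equal; apply map_ext_Forall.
  - apply (Forall_impl _ (fun x Hx => Hx (Game hl hr)) IHgr).
  - exact IHhr.
  - apply (Forall_impl _ (fun x Hx => Hx (Game hl hr)) IHgl).
  - exact IHhl.
Qed.

Lemma subpos_trans a b c : subpos a b -> subpos b c -> subpos a c.
Proof. intros Hab Hbc; induction Hbc; eauto using subpos. Qed.

Lemma subpos_option h g : is_option h g -> subpos h g.
Proof. eauto using subpos. Qed.

Lemma is_option_add k g h : is_option k (add g h) ->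
  (exists g', is_option g' g /\ k = add g' h) \/
  (exists h', is_option h' h /\ k = add g h').
Proof.
  destruct g as [gl gr], h as [hl hr]; unfold is_option.
  rewrite add_Game; simpl; rewrite !in_app_iff, !in_map_iff.
  intros [[[x [<- Hx]] | [x [<- Hx]]] | [[x [<- Hx]] | [x [<- Hx]]]];
    [left | right | left | right]; exists x; unfold is_option; auto.
Qed.

Lemma subpos_add k g h : subpos k (add g h) ->
  exists g' h', subpos g' g /\ subpos h' h /\ k = add g' h'.
Proof.
  intro Hk; remember (add g h) as s eqn:Es; revert g h Es.
  induction Hk as [s | k' s k Ho Hk IH]; intros g h ->.
  - exists g, h; repeat split; constructor.
  - destruct (is_option_add _ _ _ Ho) as [[g' [Hg' ->]] | [h' [Hh' ->]]].
    + destruct (IH _ _ eq_refl) as [a [b [Ha [Hb ->]]]].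
      exists a, b; eauto using subpos_trans, subpos_option.
    + destruct (IH _ _ eq_refl) as [a [b [Ha [Hb ->]]]].
      exists a, b; eauto using subpos_trans, subpos_option.
Qed.

Lemma is_option_addl g' g h : is_option g' g -> is_option (add g' h) (add g h).
Proof.
  destruct g as [gl gr], h as [hl hr]; unfold is_option; rewrite add_Game; simpl.
  rewrite !in_app_iff, !in_map_iff; intros [Ho | Ho]; eauto.
Qed.

Lemma is_option_addr h' g h : is_option h' h -> is_option (add g h') (add g h).
Proof.
  destruct g as [gl gr], h as [hl hr]; unfold is_option; rewrite add_Game; simpl.
  rewrite !in_app_iff, !in_map_iff; intros [Ho | Ho]; eauto 6.
Qed.

Lemma subpos_addl g' g h : subpos g' g -> subpos (add g' h) (add g h).
Proof. induction 1; eauto using subpos, is_option_addl. Qed.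

Lemma subpos_addr h' g h : subpos h' h -> subpos (add g h') (add g h).
Proof. induction 1; eauto using subpos, is_option_addr. Qed.

Lemma lefts_add_nil g h : lefts (add g h) = [] -> lefts g = [] /\ lefts h = [].
Proof.
  destruct g as [gl gr], h as [hl hr]; rewrite add_Game; simpl; intro E.
  apply app_eq_nil in E as [El Er]; apply map_eq_nil in El, Er; auto.
Qed.

Lemma left_dead_end_add g h :
  left_dead_end (add g h) -> left_dead_end g /\ left_dead_end h.
Proof.
  intro H; split; intros k Hk.
  - apply (lefts_add_nil k h), H, subpos_addl, Hk.
  - apply (lefts_add_nil g k), H, subpos_addr, Hk.
Qed.

Lemma subpos_conj k g : subpos k (conj g) -> exists k', subpos k' g /\ k = conj k'.
Proof.
  intro Hk; remember (conj g) as s eqn:Es; revert g Es.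
  induction Hk as [s | k' s k Ho Hk IH]; intros [l r] ->.
  - exists (Game l r); split; [constructor | reflexivity].
  - assert (Hopt : exists g', is_option g' (Game l r) /\ k' = conj g').
    { unfold is_option in *; simpl in *; rewrite !in_map_iff in Ho.
      destruct Ho as [[x [<- Hx]] | [x [<- Hx]]]; eauto. }
    destruct Hopt as [g' [Hg' ->]], (IH _ eq_refl) as [a [Ha ->]].
    eauto using subpos_trans, subpos_option.
Qed.

Lemma subpos_closed (A : game -> Prop) g h :
  (forall g h, A g -> is_option h g -> A h) -> A g -> subpos h g -> A h.
Proof. intros HA Hg Hh; induction Hh; eauto. Qed.

Lemma left_dead_end_conj_zero g :
  left_dead_end g -> left_dead_end (conj g) -> g = Game [] [].
Proof.
  destruct g as [l r]; intros Hg Hc.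
  specialize (Hg _ (subpos_refl _)); specialize (Hc _ (subpos_refl _)).
  simpl in *; apply map_eq_nil in Hc; subst; reflexivity.
Qed.

Definition hereditarily (P : game -> Prop) (g : game) : Prop :=
  forall h, subpos h g -> P h.

Section HereditaryUniverse.

Variable P : game -> Prop.
Hypothesis P_conj : forall g, P g -> P (conj g).
Hypothesis P_add : forall g h, P g -> P h -> P (add g h).
Hypothesis P_Game : forall l r, l <> [] -> r <> [] -> P (Game l r).

Lemma universe_hereditarily : universe (hereditarily P).
Proof.
  unfold hereditarily; split; [| split; [| split]].
  - eauto using subpos_opt.
  - intros g h Hg Hh k Hk.
    destruct (subpos_add _ _ _ Hk) as [a [b [Ha [Hb ->]]]]; auto.
  - intros g Hg k Hk.
    destruct (subpos_conj _ _ Hk) as [a [Ha ->]]; auto.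
  - intros l r Hl Hr Fl Fr k Hk; rewrite Forall_forall in Fl, Fr.
    inversion Hk as [| h g k' [Ho | Ho] Hsub]; subst; simpl in *; eauto.
Qed.

End HereditaryUniverse.

Definition dead_ends_in (A : game -> Prop) (h : game) : Prop :=
  (left_dead_end h -> A h) /\ (left_dead_end (conj h) -> A (conj h)).

Lemma dead_ends_in_conj A g : dead_ends_in A g -> dead_ends_in A (conj g).
Proof. unfold dead_ends_in; rewrite conj_involutive; tauto. Qed.

Lemma dead_ends_in_add (A : game -> Prop) :
  (forall g h, A g -> A h -> A (add g h)) ->
  forall g h, dead_ends_in A g -> dead_ends_in A h -> dead_ends_in A (add g h).
Proof.
  intros HA g h [Hg Hcg] [Hh Hch]; split.
  - intros L; destruct (left_dead_end_add _ _ L); auto.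
  - rewrite conj_add; intros L; destruct (left_dead_end_add _ _ L); auto.
Qed.

Lemma dead_ends_in_Game A l r : l <> [] -> r <> [] -> dead_ends_in A (Game l r).
Proof.
  intros Hl Hr; split; intros L; specialize (L _ (subpos_refl _)); simpl in L.
  - contradiction.
  - apply map_eq_nil in L; contradiction.
Qed.

Lemma hereditarily_dead_ends_in (A : game -> Prop) g :
  (forall g h, A g -> is_option h g -> A h) ->
  (forall g, A g -> left_dead_end g) -> A g -> hereditarily (dead_ends_in A) g.
Proof.
  intros HAo HAl Hg h Hh.
  assert (Ah : A h) by exact (subpos_closed A g h HAo Hg Hh).
  split; [auto |].
  intros L; rewrite (left_dead_end_conj_zero h (HAl h Ah) L) in Ah |- *; exact Ah.
Qed.

Theorem mainTheorem11 (A : game -> Prop) :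
  simply_closed A ->
  (forall g, A g -> left_dead_end g) ->
  forall g, (Dclos A g /\ left_dead_end g) <-> A g.
Proof.
  intros HA HAl g; split.
  - intros [HD HL].
    assert (Hg : hereditarily (dead_ends_in A) g).
    { apply HD.
      - apply universe_hereditarily.
        + apply dead_ends_in_conj.
        + exact (dead_ends_in_add A (proj2 HA)).
        + apply dead_ends_in_Game.
      - intros x; apply hereditarily_dead_ends_in; [exact (proj1 HA) | exact HAl]. }
    exact (proj1 (Hg g (subpos_refl g)) HL).
  - intros Hg; split; [intros U _ HU; auto | auto].
Qed.
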